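(* For every polynomial orbit-finite set $\Sigma$, the delay function $(\Sigma+\{\bot\})^*\supseteq\Sigma^*\ni a_1a_2\cdots a_k\mapsto \bot\,a_1\cdots a_{k-1}\in(\Sigma+\{\bot\})^*$ (for $k\ge1$; the empty word maps to itself) is a composition of primes.
   Context: Atoms $\mathbb A$ are a countably infinite set; polynomial orbit-finite sets are built from $\mathbb A$ and singletons by finite products and disjoint unions; equivariant means commuting with all bijections of $\mathbb A$. Compositions of primes: the smallest class containing (i) length-preserving homomorphisms lifting letterwise an equivariant function between polynomial orbit-finite sets, (ii) classical Mealy machine functions (finite alphabets and states, transition $Q\times\Sigma\to Q\times\Gamma$), (iii) atom propagation $(\mathbb A+\{\epsilon,\downarrow\})^*\to(\mathbb A+\bot)^*$ (position $i$ outputs the atom of position $j$ if $i$ is labelled $\downarrow$, $j<i$ carries an atom, and all positions strictly between are labelled $\epsilon$; otherwise $\bot$), closed under sequential composition and parallel composition $f_1|f_2:(\Sigma_1\times\Sigma_2)^*\to(\Gamma_1\times\Gamma_2)^*$ applying $f_i$ to the $i$-th projection. *)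

From mathcomp Require Import all_boot.
Set Implicit Arguments. Unset Strict Implicit. Unset Printing Implicit Defensive.

Definition atom := nat.

Inductive pof : Type :=
| PAtom : pof
| PUnit : pof
| PProd : pof -> pof -> pof
| PSum  : pof -> pof -> pof.

Fixpoint el (p : pof) : Type :=
  match p with
  | PAtom => atom
  | PUnit => unit
  | PProd a b => (el a * el b)%type
  | PSum a b => (el a + el b)%type
  end.

Fixpoint act (p : pof) (pi : atom -> atom) : el p -> el p :=
  match p return el p -> el p with
  | PAtom => fun x => pi x
  | PUnit => fun x => x
  | PProd a b => fun x => (act pi x.1, act pi x.2)
  | PSum a b => fun x => match x with
                         | inl y => inl (act pi y)
                         | inr z => inr (act pi z)
                         end
  end.

Definition equivariant (p q : pof) (f : el p -> el q) : Prop :=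
  forall pi : atom -> atom, bijective pi ->
    forall x : el p, f (act pi x) = act pi (f x).

(* Finite alphabets are the atom-free polynomial orbit-finite sets. *)
Fixpoint atom_free (p : pof) : bool :=
  match p with
  | PAtom => false
  | PUnit => true
  | PProd a b => atom_free a && atom_free b
  | PSum a b => atom_free a && atom_free b
  end.

Fixpoint mealy_run (Q A B : Type) (d : Q -> A -> Q * B) (q : Q) (w : seq A)
  : seq B :=
  match w with
  | [::] => [::]
  | a :: w' => (d q a).2 :: mealy_run d (d q a).1 w'
  end.

(* Atom propagation alphabets:
   input  A + {eps, down} encoded as PSum PAtom (PSum PUnit PUnit),
          inr (inl tt) = eps, inr (inr tt) = down;
   output A + {bot} encoded as PSum PAtom PUnit, inr tt = bot. *)
Definition prop_in : pof := PSum PAtom (PSum PUnit PUnit).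
Definition prop_out : pof := PSum PAtom PUnit.

Definition is_eps (x : el prop_in) : bool :=
  match x with inr (inl _) => true | _ => false end.
Definition is_down (x : el prop_in) : bool :=
  match x with inr (inr _) => true | _ => false end.

Fixpoint drop_eps (s : seq (el prop_in)) : seq (el prop_in) :=
  match s with
  | x :: s' => if is_eps x then drop_eps s' else s
  | [::] => [::]
  end.

(* Output at position i: if position i is "down", look at the nearest
   position j < i that is not labelled eps; if it carries an atom, output
   that atom (then all positions strictly between j and i are eps);
   otherwise output bot. *)
Definition atom_prop_at (w : seq (el prop_in)) (i : nat) : el prop_out :=
  if is_down (nth (inr (inl tt)) w i) then
    match drop_eps (rev (take i w)) with
    | inl a :: _ => inl a
    | _ => inr tt
    end
  else inr tt.

Definition atom_prop (w : seq (el prop_in)) : seq (el prop_out) :=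
  mkseq (atom_prop_at w) (size w).

Unset Implicit Arguments.
Inductive comp_primes : forall (S G : pof), (seq (el S) -> seq (el G)) -> Prop :=
| CP_hom (S G : pof) (f : el S -> el G) :
    equivariant f -> comp_primes S G (map f)
| CP_mealy (S G : pof) (Q : finType) (q0 : Q) (d : Q -> el S -> Q * el G) :
    atom_free S -> atom_free G -> comp_primes S G (mealy_run d q0)
| CP_prop : comp_primes prop_in prop_out atom_prop
| CP_seq (S M G : pof) (f : seq (el S) -> seq (el M)) (g : seq (el M) -> seq (el G)) :
    comp_primes S M f -> comp_primes M G g -> comp_primes S G (fun w => g (f w))
| CP_par (S1 S2 G1 G2 : pof)
    (f1 : seq (el S1) -> seq (el G1)) (f2 : seq (el S2) -> seq (el G2)) :
    comp_primes S1 G1 f1 -> comp_primes S2 G2 f2 ->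
    comp_primes (PProd S1 S2) (PProd G1 G2)
      (fun w => zip (f1 (unzip1 w)) (f2 (unzip2 w))).

Set Implicit Arguments.

Definition delay (S : pof) (w : seq (el S)) : seq (el (PSum S PUnit)) :=
  take (size w) ((inr tt : el (PSum S PUnit)) :: map (fun a => (inl a : el (PSum S PUnit))) w).

From Stdlib Require Import FunctionalExtensionality.
From mathcomp Require Import all_boot.

Set Implicit Arguments. Unset Strict Implicit. Unset Printing Implicit Defensive.

(* We prove the stronger statement that, for every polynomial
   orbit-finite set S, the shift  w |-> take |w| (bot :: w)  on words over
   S + {bot} is a composition of primes; the delay on S is this shift
   precomposed with the letterwise inclusion S -> S + {bot}.  The shift is
   built by induction on S:
   - S = 1: the alphabet 1 + 1 is finite, so a two-state Mealy machine that
     remembers the previous letter does the job;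
   - S = A * B and S = A + B: split each letter of S + {bot} equivariantly
     into a pair of letters of A + {bot} and B + {bot}, shift both
     components in parallel and merge back (a general transfer lemma);
   - S = atoms: a parity Mealy machine distributes the letters alternately
     onto two tracks, padding with "down"; atom propagation on each track
     then copies every letter one position to the right, and merging the two
     tracks letterwise yields the shift. *)

Lemma cp_ext (S G : pof) (f g : seq (el S) -> seq (el G)) :
  comp_primes S G f -> (forall w, f w = g w) -> comp_primes S G g.
Proof.
move=> cpf fg; have -> : g = f by apply: functional_extensionality => w.
exact: cpf.
Qed.

Definition bot {S : pof} : el (PSum S PUnit) := inr tt.

Definition shift (S : pof) (w : seq (el (PSum S PUnit))) :
  seq (el (PSum S PUnit)) :=
  take (size w) (bot :: w).

Lemma size_shift (S : pof) (w : seq (el (PSum S PUnit))) :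
  size (shift w) = size w.
Proof. by rewrite size_takel //= leqnSn. Qed.

Lemma nth_shift (S : pof) (w : seq (el (PSum S PUnit))) i : i < size w ->
  nth bot (shift w) i = if i is j.+1 then nth bot w j else bot.
Proof. by move=> lt_i_w; rewrite nth_take //; case: i lt_i_w. Qed.

Lemma shift_map (A B : pof) (g : el (PSum A PUnit) -> el (PSum B PUnit)) w :
  g bot = bot -> shift (map g w) = map g (shift w).
Proof. by move=> g_bot; rewrite /shift size_map map_take /= g_bot. Qed.

Lemma unzip1_map (T U V : Type) (f : T -> U * V) (s : seq T) :
  unzip1 (map f s) = map (fun x => (f x).1) s.
Proof. by rewrite /unzip1 -map_comp. Qed.

Lemma unzip2_map (T U V : Type) (f : T -> U * V) (s : seq T) :
  unzip2 (map f s) = map (fun x => (f x).2) s.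
Proof. by rewrite /unzip2 -map_comp. Qed.

Lemma zip_map2 (T U V : Type) (f : T -> U) (g : T -> V) (s : seq T) :
  zip (map f s) (map g s) = map (fun x => (f x, g x)) s.
Proof. by elim: s => //= x s ->. Qed.

(* Base case S = 1: the Mealy machine whose state is "the previous letter
   was not bot". *)
Definition prev_step (q : bool) (x : el (PSum PUnit PUnit)) :
  bool * el (PSum PUnit PUnit) :=
  (if x is inl _ then true else false, if q then inl tt else inr tt).

Lemma mealy_prev_step q w :
  mealy_run prev_step q w = take (size w) ((if q then inl tt else inr tt) :: w).
Proof. by elim: w q => [|x w IH] q //=; rewrite IH; case: q; case: x => [[]|[]]. Qed.

Lemma cp_shift_unit : comp_primes _ _ (@shift PUnit).
Proof.
apply: cp_ext (CP_mealy _ _ _ false prev_step _ _) _ => // w.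
by rewrite mealy_prev_step.
Qed.

(* Transfer: if the letters of S + {bot} embed equivariantly into pairs of
   letters of A + {bot} and B + {bot}, bot going to (bot, bot), with an
   equivariant left inverse, then the shift on S reduces to the shifts on
   A and B run in parallel. *)
Section Transfer.
Variables S A B : pof.
Variable split : el (PSum S PUnit) -> el (PProd (PSum A PUnit) (PSum B PUnit)).
Variable merge : el (PProd (PSum A PUnit) (PSum B PUnit)) -> el (PSum S PUnit).
Hypothesis split_equiv : equivariant split.
Hypothesis merge_equiv : equivariant merge.
Hypothesis split_bot : split bot = (bot, bot).
Hypothesis splitK : cancel split merge.

Lemma cp_shift_transfer :
  comp_primes _ _ (@shift A) -> comp_primes _ _ (@shift B) ->
  comp_primes _ _ (@shift S).
Proof.
move=> cpA cpB.
apply: cp_ext (CP_seq _ _ _ _ _ (CP_hom _ _ _ split_equiv)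
   (CP_seq _ _ _ _ _ (CP_par _ _ _ _ _ _ cpA cpB) (CP_hom _ _ _ merge_equiv))) _.
move=> w /=; rewrite unzip1_map unzip2_map.
rewrite (shift_map (g := fun x => (split x).1)) ?split_bot //.
rewrite (shift_map (g := fun x => (split x).2)) ?split_bot //.
rewrite zip_map2 -map_comp -[RHS]map_id; apply: eq_map => x /=.
by rewrite -surjective_pairing splitK.
Qed.
End Transfer.

Section ProductAndSum.
Variables A B : pof.

Definition split_prod (x : el (PSum (PProd A B) PUnit)) :
  el (PProd (PSum A PUnit) (PSum B PUnit)) :=
  if x is inl (a, b) then (inl a, inl b) else (bot, bot).

Definition merge_prod (y : el (PProd (PSum A PUnit) (PSum B PUnit))) :
  el (PSum (PProd A B) PUnit) :=
  if y is (inl a, inl b) then inl (a, b) else bot.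

Lemma cp_shift_prod : comp_primes _ _ (@shift A) -> comp_primes _ _ (@shift B) ->
  comp_primes _ _ (@shift (PProd A B)).
Proof.
apply: (@cp_shift_transfer _ _ _ split_prod merge_prod) => //.
- by move=> pi _ [[a b]|[]].
- by move=> pi _ [[a|[]] [b|[]]].
- by case=> [[a b]|[]].
Qed.

Definition split_sum (x : el (PSum (PSum A B) PUnit)) :
  el (PProd (PSum A PUnit) (PSum B PUnit)) :=
  match x with
  | inl (inl a) => (inl a, bot)
  | inl (inr b) => (bot, inl b)
  | inr _ => (bot, bot)
  end.

Definition merge_sum (y : el (PProd (PSum A PUnit) (PSum B PUnit))) :
  el (PSum (PSum A B) PUnit) :=
  match y with
  | (inl a, _) => inl (inl a)
  | (_, inl b) => inl (inr b)
  | _ => bot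
  end.

Lemma cp_shift_sum : comp_primes _ _ (@shift A) -> comp_primes _ _ (@shift B) ->
  comp_primes _ _ (@shift (PSum A B)).
Proof.
apply: (@cp_shift_transfer _ _ _ split_sum merge_sum) => //.
- by move=> pi _ [[a|b]|[]].
- by move=> pi _ [[a|[]] [b|[]]].
- by case=> [[a|b]|[]].
Qed.
End ProductAndSum.

Definition eps_in : el prop_in := inr (inl tt).
Definition down_in : el prop_in := inr (inr tt).

Lemma atom_prop_at_eps_free (s : seq (el prop_in)) i :
  i < size s -> all (fun x => ~~ is_eps x) s ->
  atom_prop_at s i =
    if is_down (nth eps_in s i) then
      (if i is j.+1 then (if nth eps_in s j is inl a then inl a else inr tt)
       else inr tt)
    else inr tt.
Proof.
move=> lt_i_s no_eps; rewrite /atom_prop_at.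
case: (is_down _) => //; case: i lt_i_s => [|j] lt_j_s; first by rewrite take0.
rewrite (take_nth eps_in) ?(ltnW lt_j_s) // rev_rcons /=.
have : ~~ is_eps (nth eps_in s j) by apply: (allP no_eps); exact: mem_nth (ltnW _).
by case: (nth eps_in s j) => [a|[[]|[]]].
Qed.

Definition down_if_bot (x : el (PSum PAtom PUnit)) : el prop_in :=
  if x is inl a then inl a else down_in.

Definition track (b : bool) (w : seq (el (PSum PAtom PUnit))) : seq (el prop_in) :=
  mkseq (fun k => if odd k == b then down_if_bot (nth bot w k) else down_in)
        (size w).

Lemma size_track b w : size (track b w) = size w.
Proof. exact: size_mkseq. Qed.

Lemma atom_prop_track b w :
  atom_prop (track b w) =
  mkseq (fun i => if i is j.+1 then (if odd j == b then nth bot w j else bot)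
                  else bot) (size w).
Proof.
have no_eps : all (fun x => ~~ is_eps x) (track b w).
  by apply/allP => _ /mapP[k _ ->]; case: ifP => _ //; case: (nth bot w k).
apply: (@eq_from_nth _ bot); rewrite /atom_prop !size_mkseq // => i lt_i_w.
rewrite !nth_mkseq ?size_mkseq // atom_prop_at_eps_free ?size_mkseq //.
rewrite nth_mkseq //; case: i lt_i_w => [|j] lt_j_w /=.
  by case: ifP.
rewrite nth_mkseq ?(ltnW lt_j_w) //; clear no_eps.
by case: (odd j); case: b => /=; case: (nth bot w j) => [a|[]];
  case: (nth bot w j.+1) => [c|[]].
Qed.

Definition parity_step (q : bool) (_ : el PUnit) : bool * el (PSum PUnit PUnit) :=
  (~~ q, if q then inr tt else inl tt).

Lemma nth_parity q (s : seq (el PUnit)) i : i < size s ->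
  nth (inl tt) (mealy_run parity_step q s) i =
  if q (+) odd i then inr tt else inl tt.
Proof.
elim: s q i => [|x s IH] q [|i] //= lt_i_s; first by case: q.
by rewrite IH //; case: q; case: (odd i).
Qed.

Lemma size_mealy_run (Q I O : Type) (d : Q -> I -> Q * O) q s :
  size (mealy_run d q s) = size s.
Proof. by elim: s q => //= x s IH q; rewrite IH. Qed.

Definition to_tracks (y : el (PProd (PSum PUnit PUnit) (PSum PAtom PUnit))) :
  el (PProd prop_in prop_in) :=
  if y.1 is inl _ then (down_if_bot y.2, down_in) else (down_in, down_if_bot y.2).

(* Writing a word onto the two tracks is a composition of primes: tag each
   letter with a unit, run the parity machine on the tags, and dispatch. *)
Lemma cp_tracks : comp_primes (PSum PAtom PUnit) (PProd prop_in prop_in)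
  (fun w => zip (track false w) (track true w)).
Proof.
have tag_equiv : equivariant (fun x : el (PSum PAtom PUnit) =>
  (tt, x) : el (PProd PUnit (PSum PAtom PUnit))) by [].
have id_equiv : equivariant (fun x : el (PSum PAtom PUnit) => x) by [].
have to_tracks_equiv : equivariant to_tracks by move=> pi _ [[[]|[]] [a|[]]].
have parity := CP_mealy PUnit (PSum PUnit PUnit) bool false parity_step erefl erefl.
apply: cp_ext (CP_seq _ _ _ _ _ (CP_hom _ _ _ tag_equiv)
  (CP_seq _ _ _ _ _ (CP_par _ _ _ _ _ _ parity (CP_hom _ _ _ id_equiv))
  (CP_hom _ _ _ to_tracks_equiv))) _ => w.
rewrite unzip1_map unzip2_map !map_id.
set tags := mealy_run parity_step false _.
have size_tags : size tags = size w by rewrite size_mealy_run size_map.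
have nth_tags k : k < size w ->
    nth (inl tt) tags k = if odd k then inr tt else inl tt.
  by move=> lt_k_w; rewrite nth_parity ?size_map.
clearbody tags; apply: (@eq_from_nth _ (down_in, down_in)).
  by rewrite size_map !size_zip size_tags !size_track minnn.
rewrite size_map size_zip size_tags minnn => k lt_k_w.
rewrite (nth_map (inl tt, @bot PAtom) (down_in, down_in));
  last by rewrite size_zip size_tags minnn.
rewrite !nth_zip ?size_tags ?size_track // !nth_mkseq // nth_tags //.
by case: (odd k).
Qed.

Definition first_atom (o : el (PProd prop_out prop_out)) : el (PSum PAtom PUnit) :=
  if o.1 is inl a then inl a else o.2.

Lemma cp_shift_atom : comp_primes _ _ (@shift PAtom).
Proof.
have first_atom_equiv : equivariant first_atom by move=> pi _ [[a|[]] [b|[]]].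
apply: cp_ext (CP_seq _ _ _ _ _ cp_tracks (CP_seq _ _ _ _ _
  (CP_par _ _ _ _ _ _ CP_prop CP_prop) (CP_hom _ _ _ first_atom_equiv))) _.
move=> w /=; rewrite unzip1_zip ?unzip2_zip ?size_track //.
rewrite !atom_prop_track.
apply: (@eq_from_nth _ (@bot PAtom)).
  by rewrite size_map size_zip !size_mkseq minnn size_shift.
rewrite size_map size_zip !size_mkseq minnn => i lt_i_w.
rewrite nth_shift // (nth_map (@bot PAtom, @bot PAtom) (@bot PAtom));
  last by rewrite size_zip !size_mkseq minnn.
rewrite nth_zip ?size_mkseq // !nth_mkseq //.
by case: i lt_i_w => [|j] //= _; case: (odd j) => /=; case: (nth bot w j) => [a|[]].
Qed.

Lemma cp_shift (S : pof) : comp_primes _ _ (@shift S).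
Proof.
elim: S => [||A cpA B cpB|A cpA B cpB].
- exact: cp_shift_atom.
- exact: cp_shift_unit.
- exact: cp_shift_prod.
- exact: cp_shift_sum.
Qed.

Theorem mainTheorem13 (S : pof) : comp_primes S (PSum S PUnit) (@delay S).
Proof.
have inl_equiv : equivariant (fun x : el S => inl x : el (PSum S PUnit)) by [].
apply: cp_ext (CP_seq _ _ _ _ _ (CP_hom _ _ _ inl_equiv) (cp_shift S)) _ => w.
by rewrite /shift /delay size_map.
Qed.
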